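(* Let $K=\operatorname{cone}\{e_1,\dots,e_m\}\subset\mathbb{R}^m$ be a simplicial cone. Then there exists $\varepsilon\in\mathcal{E}$ such that $K_\varepsilon$ is subdual if and only if there exists an index set $I\subset\{1,\dots,m\}$, with complement $I^c=\{1,\dots,m\}\setminus I$, such that $\langle e_i,e_j\rangle\ge0$ for all $i,j\in I$, $\langle e_k,e_\ell\rangle\ge0$ for all $k,\ell\in I^c$, and $\langle e_i,e_k\rangle\le0$ for all $i\in I$, $k\in I^c$.
   Context: $\mathbb{R}^m$ carries the standard inner product. A simplicial cone is $\operatorname{cone}\{e_1,\dots,e_m\}=\{\sum t^ie_i:t^i\ge0\}$ with $e_1,\dots,e_m$ linearly independent. $\mathcal{E}=\{\varepsilon\in\mathbb{R}^m:|\varepsilon^i|=1,\ i=1,\dots,m\}$ and $K_\varepsilon=\operatorname{cone}\{\varepsilon^1e_1,\dots,\varepsilon^me_m\}$. A cone $K$ is subdual if $K\subset K^*$, where $K^*=\{y:\langle x,y\rangle\ge0\ \forall x\in K\}$. *)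

From mathcomp Require Import all_boot all_order all_algebra.
Set Implicit Arguments. Unset Strict Implicit. Unset Printing Implicit Defensive.
Import Order.TTheory GRing.Theory Num.Theory.
Local Open Scope ring_scope.

Definition inner {R : realFieldType} {m : nat} (x y : 'rV[R]_m) : R :=
  \sum_(i < m) x 0 i * y 0 i.

Definition gen_mx {R : realFieldType} {m : nat} (e : 'I_m -> 'rV[R]_m) : 'M[R]_m :=
  \matrix_(i < m) e i.

Definition lin_indep {R : realFieldType} {m : nat} (e : 'I_m -> 'rV[R]_m) : Prop :=
  row_free (gen_mx e).

Definition cone {R : realFieldType} {m : nat} (e : 'I_m -> 'rV[R]_m) (x : 'rV[R]_m) : Prop :=
  exists t : 'I_m -> R, (forall i, 0 <= t i) /\ x = \sum_(i < m) t i *: e i.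

Definition dual_cone {R : realFieldType} {m : nat} (K : 'rV[R]_m -> Prop) (y : 'rV[R]_m) : Prop :=
  forall x, K x -> 0 <= inner x y.

Definition subdual {R : realFieldType} {m : nat} (K : 'rV[R]_m -> Prop) : Prop :=
  forall x, K x -> dual_cone K x.

Definition sign_vector {R : realFieldType} {m : nat} (eps : 'I_m -> R) : Prop :=
  forall i, `|eps i| = 1.

Definition K_eps {R : realFieldType} {m : nat} (e : 'I_m -> 'rV[R]_m) (eps : 'I_m -> R) :=
  cone (fun i => eps i *: e i).

From mathcomp Require Import all_boot all_order all_algebra.
Import Order.TTheory GRing.Theory Num.Theory.
Local Open Scope ring_scope.

(* A cone is subdual exactly when its generators have pairwise nonnegative
   inner products, by bilinearity.  For the generators [eps i *: e i] this
   reads [0 <= eps i * eps j * <e i, e j>]; a sign vector is the sign pattern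
   [+1] on a set [I] and [-1] off it, and the sign condition then splits into
   the three conditions on [I x I], [I^c x I^c] and [I x I^c]. *)

Section Inner.

Context {R : realFieldType} {m : nat}.
Implicit Types (x y : 'rV[R]_m) (F : 'I_m -> 'rV[R]_m).

Lemma inner_sym x y : inner x y = inner y x.
Proof. by apply: eq_bigr => k _; rewrite mulrC. Qed.

Lemma inner_suml F y : inner (\sum_(i < m) F i) y = \sum_(i < m) inner (F i) y.
Proof.
rewrite /inner exchange_big; apply: eq_bigr => k _.
by rewrite summxE mulr_suml.
Qed.

Lemma inner_sumr F y : inner y (\sum_(i < m) F i) = \sum_(i < m) inner y (F i).
Proof. by rewrite inner_sym inner_suml; apply: eq_bigr => i _; rewrite inner_sym. Qed.

Lemma inner_scalel a x y : inner (a *: x) y = a * inner x y.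
Proof. by rewrite /inner mulr_sumr; apply: eq_bigr => k _; rewrite mxE mulrA. Qed.

Lemma inner_scaler a x y : inner x (a *: y) = a * inner x y.
Proof. by rewrite inner_sym inner_scalel inner_sym. Qed.

Lemma inner_scale2 a b x y : inner (a *: x) (b *: y) = a * b * inner x y.
Proof. by rewrite inner_scalel inner_scaler mulrA. Qed.

End Inner.

Section Cone.

Context {R : realFieldType} {m : nat}.

Lemma cone_gen (f : 'I_m -> 'rV[R]_m) i : cone f (f i).
Proof.
exists (fun j => (j == i)%:R); split=> [j|]; first exact: ler0n.
rewrite (bigD1 i) //= eqxx scale1r big1 ?addr0 // => j /negbTE ->.
by rewrite scale0r.
Qed.

Lemma subdual_coneP (f : 'I_m -> 'rV[R]_m) :
  subdual (cone f) <-> forall i j, 0 <= inner (f i) (f j).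
Proof.
split=> [sub i j | pos _ [s [s_ge0 ->]] _ [t [t_ge0 ->]]].
  exact: sub _ (cone_gen f j) _ (cone_gen f i).
rewrite inner_suml; apply: sumr_ge0 => i _.
rewrite inner_sumr; apply: sumr_ge0 => j _.
by rewrite inner_scale2 !mulr_ge0.
Qed.

Lemma subdual_K_epsP (e : 'I_m -> 'rV[R]_m) (eps : 'I_m -> R) :
  subdual (K_eps e eps) <-> forall i j, 0 <= eps i * eps j * inner (e i) (e j).
Proof.
rewrite /K_eps; split=> [/subdual_coneP H i j | H].
  by rewrite -inner_scale2.
by apply/subdual_coneP => i j; rewrite inner_scale2.
Qed.

End Cone.

Section SignPattern.

Context {R : realFieldType} {m : nat}.
Implicit Type I : {set 'I_m}.

Definition sign_of I (i : 'I_m) : R := if i \in I then 1 else -1.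

Lemma sign_vector_sign_of I : sign_vector (sign_of I).
Proof. by move=> i; rewrite /sign_of; case: (i \in I); rewrite ?normrN normr1. Qed.

Lemma sign_vectorE (eps : 'I_m -> R) :
  sign_vector eps -> forall i, eps i = sign_of [set j | 0 < eps j] i.
Proof.
move=> eps1 i; rewrite /sign_of inE; case: ltrP => [eps_gt0 | eps_le0].
  by rewrite -(eps1 i) gtr0_norm.
by rewrite -(eps1 i) ler0_norm ?opprK.
Qed.

Lemma sign_pattern_ge0P I (a : 'I_m -> 'I_m -> R) :
  (forall i j, a i j = a j i) ->
  (forall i j, 0 <= sign_of I i * sign_of I j * a i j) <->
  [/\ forall i j, i \in I -> j \in I -> 0 <= a i j,
      forall k l, k \in ~: I -> l \in ~: I -> 0 <= a k l
    & forall i k, i \in I -> k \in ~: I -> a i k <= 0].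
Proof.
move=> a_sym; rewrite /sign_of; split=> [H | [HII HCC HIC] i j].
  split=> i j; rewrite ?inE => hi hj; move: (H i j).
  - by rewrite hi hj !mul1r.
  - by rewrite (negbTE hi) (negbTE hj) mulrNN !mul1r.
  - by rewrite hi (negbTE hj) mul1r mulN1r oppr_ge0.
case: (boolP (i \in I)) => hi; case: (boolP (j \in I)) => hj.
- by rewrite !mul1r HII.
- by rewrite mul1r mulN1r oppr_ge0 HIC // inE.
- by rewrite mulr1 mulN1r oppr_ge0 a_sym HIC // inE.
- by rewrite mulrNN !mul1r HCC // inE.
Qed.

End SignPattern.

Theorem lemma3 (R : realFieldType) (m : nat) (e : 'I_m -> 'rV[R]_m) :
  lin_indep e ->
  ((exists eps : 'I_m -> R, sign_vector eps /\ subdual (K_eps e eps)) <->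
   (exists I : {set 'I_m},
      (forall i j, i \in I -> j \in I -> 0 <= inner (e i) (e j)) /\
      (forall k l, k \in ~: I -> l \in ~: I -> 0 <= inner (e k) (e l)) /\
      (forall i k, i \in I -> k \in ~: I -> inner (e i) (e k) <= 0))).
Proof.
move=> _; have inner_e_sym i j : inner (e i) (e j) = inner (e j) (e i).
  exact: inner_sym.
split=> [[eps [eps_sign /subdual_K_epsP sub]] | [I [HII [HCC HIC]]]].
  exists [set j | 0 < eps j].
  have [] // := (sign_pattern_ge0P [set j | 0 < eps j] _ inner_e_sym).1.
  by move=> i j; rewrite -!sign_vectorE.
exists (sign_of I); split; first exact: sign_vector_sign_of.
by apply/subdual_K_epsP/(sign_pattern_ge0P I _ inner_e_sym).
Qed.
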